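(* Let $N=\{1,\dots,n\}$ and $u:X\to\mathbb{R}$ non-constant affine. Suppose that for each $i\in N$, $\succ_i$ is a Bewley preference on $\mathcal{F}$ with unique representation $(u,C_i)$, and that $\succ_0$ is either a hope-and-prepare preference with unique representation $(u,C_0,C_0)$ or a Bewley preference with unique representation $(u,C_0)$. Then: (i) Pareto (for all $f,g\in\mathcal{F}$, if $f\succ_i g$ for all $i\in N$ then $f\succ_0 g$) holds if and only if $C_0\subseteq\mathrm{co}\left(\bigcup_{i=1}^nC_i\right)$; (ii) Caution for incomparability (for all $f\in\mathcal{F}$, $x\in X$, if there is $i\in N$ with $f\Join_i x$ then $f\Join_0 x$) holds if and only if $\mathrm{co}\left(\bigcup_{i=1}^nC_i\right)\subseteq C_0$. In particular, when both conditions hold, $C_0=\mathrm{co}\left(\bigcup_{i=1}^nC_i\right)$.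
   Context: $S$ is a set of states with algebra $\Sigma$; $X$ is a non-singleton convex subset of a real vector space; $\mathcal{F}$ is the set of simple acts $f:S\to X$; elements of $X$ are identified with constant acts; $\Delta$ is the set of finitely additive probability measures on $(S,\Sigma)$ with weak* topology; $\mathrm{co}(P)$ denotes the convex hull of $P\subseteq\Delta$. A Bewley preference with representation $(u,C)$ ($C\subseteq\Delta$ non-empty convex compact): $f\succ g$ iff $\int u(f)dp>\int u(g)dp$ for all $p\in C$. A hope-and-prepare preference with representation $(u,C,D)$ ($C,D$ convex compact, $C\cap D\ne\emptyset$): $f\succ g$ iff $\min_{p\in C}\int u(f)dp>\min_{p\in C}\int u(g)dp$ and $\max_{p\in D}\int u(f)dp>\max_{p\in D}\int u(g)dp$. Unique representation: sets unique, $u$ unique up to positive affine transformation. $f\Join_i x$ means $f\not\succ_i x$ and $x\not\succ_i f$. *)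

From HB Require Import structures.
From mathcomp Require Import all_boot all_order all_algebra.
From mathcomp Require Import all_classical all_reals all_analysis.
Set Implicit Arguments. Unset Strict Implicit. Unset Printing Implicit Defensive.
Import Order.TTheory GRing.Theory Num.Theory.
Import numFieldNormedType.Exports.
Local Open Scope classical_set_scope.
Local Open Scope ring_scope.

Section Defs.
Variables (R : realType) (S : Type) (V : lmodType R).

Definition is_algebra (Sig : set (set S)) : Prop :=
  Sig setT /\ (forall A, Sig A -> Sig (~` A)) /\
  (forall A B, Sig A -> Sig B -> Sig (A `|` B)).

Definition convex_X (X : set V) : Prop :=
  forall x y (a : R), X x -> X y -> 0 <= a <= 1 -> X (a *: x + (1 - a) *: y).

Definition non_singleton (X : set V) : Prop :=
  exists x y, X x /\ X y /\ x <> y.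

Definition is_act (Sig : set (set S)) (X : set V) (f : S -> V) : Prop :=
  (forall s, X (f s)) /\ finite_set (range f) /\
  (forall x, Sig (f @^-1` [set x])).

Definition affine_on (X : set V) (u : V -> R) : Prop :=
  forall x y (a : R), X x -> X y -> 0 <= a <= 1 ->
    u (a *: x + (1 - a) *: y) = a * u x + (1 - a) * u y.

Definition nonconstant_on (X : set V) (u : V -> R) : Prop :=
  exists x y, X x /\ X y /\ u x <> u y.

(* finitely additive probability measures on (S, Sig); by convention
   p A = 0 for A outside Sig, so that a measure is determined by its
   values on Sig *)
Definition fa_prob (Sig : set (set S)) (p : set S -> R) : Prop :=
  (forall A, ~ Sig A -> p A = 0) /\
  (forall A, Sig A -> 0 <= p A) /\ p setT = 1 /\
  (forall A B, Sig A -> Sig B -> A `&` B = set0 -> p (A `|` B) = p A + p B).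

Definition expect (u : V -> R) (f : S -> V) (p : set S -> R) : R :=
  (\sum_(x \in range f) (u x * p (f @^-1` [set x])))%R.

Definition convex_meas (P : set (set S -> R)) : Prop :=
  forall p q (a : R), P p -> P q -> 0 <= a <= 1 ->
    P (fun A => a * p A + (1 - a) * q A).

Definition co (P : set (set S -> R)) : set (set S -> R) :=
  [set q | exists (m : nat) (w : 'I_m -> R) (ps : 'I_m -> set S -> R),
     (forall i, 0 <= w i) /\ (\sum_(i < m) w i = 1) /\ (forall i, P (ps i)) /\
     q = (fun A => \sum_(i < m) w i * ps i A)].

(* weak* topology on Delta = setwise convergence on events (given the
   convention p A = 0 outside Sig): the pointwise topology on set S -> R *)
Definition wstar_compact (P : set (set S -> R)) : Prop :=
  @compact {ptws set S -> R} P.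

Definition prior_set (Sig : set (set S)) (C : set (set S -> R)) : Prop :=
  C `<=` fa_prob Sig /\ convex_meas C /\ wstar_compact C.

Definition pref := (S -> V) -> (S -> V) -> Prop.

Definition bewley_rep (Sig : set (set S)) (X : set V) (P : pref)
    (u : V -> R) (C : set (set S -> R)) : Prop :=
  affine_on X u /\ prior_set Sig C /\ C !=set0 /\
  forall f g, is_act Sig X f -> is_act Sig X g ->
    (P f g <-> forall p, C p -> expect u f p > expect u g p).

Definition minE (u : V -> R) (C : set (set S -> R)) (f : S -> V) : R :=
  inf [set expect u f p | p in C].
Definition maxE (u : V -> R) (D : set (set S -> R)) (f : S -> V) : R :=
  sup [set expect u f p | p in D].

Definition hp_rep (Sig : set (set S)) (X : set V) (P : pref)
    (u : V -> R) (C D : set (set S -> R)) : Prop :=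
  affine_on X u /\ prior_set Sig C /\ prior_set Sig D /\ (C `&` D) !=set0 /\
  forall f g, is_act Sig X f -> is_act Sig X g ->
    (P f g <-> minE u C f > minE u C g /\ maxE u D f > maxE u D g).

Definition pos_affine_equiv (X : set V) (u u' : V -> R) : Prop :=
  exists a b : R, 0 < a /\ forall x, X x -> u' x = a * u x + b.

Definition unique_bewley Sig X (P : pref) u C : Prop :=
  bewley_rep Sig X P u C /\
  forall u' C', bewley_rep Sig X P u' C' -> C' = C /\ pos_affine_equiv X u u'.

Definition unique_hp Sig X (P : pref) u C D : Prop :=
  hp_rep Sig X P u C D /\
  forall u' C' D', hp_rep Sig X P u' C' D' ->
    C' = C /\ D' = D /\ pos_affine_equiv X u u'.

Definition incomparable (P : pref) (f : S -> V) (x : V) : Prop :=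
  ~ P f (fun _ => x) /\ ~ P (fun _ => x) f.

End Defs.

(* Both kinds of representation decide a comparison between an act f and a constant x
   by the sign of the expected utility of f on each prior (for a hope-and-prepare
   preference with C = D the min- and the max-condition then coincide), and strict
   expected-utility dominance on every prior implies strict preference.  Hence
   C0 <= co (U C_i) yields Pareto and co (U C_i) <= C0 yields caution, by averaging over
   the weights of a convex combination.
   Conversely, a prior q outside a weak*-compact convex set K of priors is strictly
   separated from K by an act: compactness provides finitely many events on which every
   p in K differs from q, the point of K nearest to q in these finitely many coordinates
   gives a separating linear functional, and that functional is, up to an increasing
   affine change, the expected utility of an act paying a mixture of two outcomes
   x1, x2 with u x1 < u x2 on each atom generated by the events.  Comparing this act
   with its certainty equivalent refutes Pareto when q is in C0 but outside the hull,
   and caution when q is in the hull but outside C0. *)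

From HB Require Import structures.
From mathcomp Require Import all_boot all_order all_algebra.
From mathcomp Require Import all_classical all_reals all_analysis.
From mathcomp Require Import ring lra.
Set Implicit Arguments. Unset Strict Implicit. Unset Printing Implicit Defensive.
Import Order.TTheory GRing.Theory Num.Theory.
Import numFieldNormedType.Exports.
Local Open Scope classical_set_scope.
Local Open Scope ring_scope.

Lemma convex_comb_lt (R : realType) m (w a b : 'I_m -> R) :
  (forall k, 0 <= w k) -> \sum_(k < m) w k = 1 -> (forall k, a k < b k) ->
  \sum_(k < m) w k * a k < \sum_(k < m) w k * b k.
Proof.
move=> w_ge0 w_sum1 ab.
have [k wk_gt0] : exists k, 0 < w k.
  apply: contrapT => /forallNP w_le0; move/eqP: w_sum1; rewrite big1 1?eq_sym ?oner_eq0 //.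
  by move=> k _; apply/eqP; rewrite eq_le w_ge0 andbT leNgt; apply/negP/w_le0.
rewrite -subr_gt0 -sumrB (bigD1 k) //= ltr_wpDr //.
  by apply: sumr_ge0 => i _; rewrite -mulrBr mulr_ge0 // subr_ge0 ltW.
by rewrite -mulrBr mulr_gt0 // subr_gt0.
Qed.

Lemma exists_le_convex_comb (R : realType) m (w a : 'I_m -> R) :
  (forall k, 0 <= w k) -> \sum_(k < m) w k = 1 ->
  exists k, a k <= \sum_(k < m) w k * a k.
Proof.
move=> w_ge0 w_sum1; apply: contrapT => /forallNP a_gt.
have lt_a k : \sum_(k < m) w k * a k < a k by rewrite ltNge; exact/negP/a_gt.
by have := convex_comb_lt w_ge0 w_sum1 lt_a; rewrite -mulr_suml w_sum1 mul1r ltxx.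
Qed.

Section Events.
Context {S : Type} {Sig : set (set S)}.
Hypothesis hSig : is_algebra Sig.

Lemma algebraT : Sig setT.
Proof. by case: hSig. Qed.

Lemma algebraC A : Sig A -> Sig (~` A).
Proof. by case: hSig => _ [hC _]; exact: hC. Qed.

Lemma algebraU A B : Sig A -> Sig B -> Sig (A `|` B).
Proof. by case: hSig => _ [_ hU]; exact: hU. Qed.

Lemma algebra0 : Sig set0.
Proof. by rewrite -setCT; exact/algebraC/algebraT. Qed.

Lemma algebraI A B : Sig A -> Sig B -> Sig (A `&` B).
Proof.
by move=> SA SB; rewrite -[A `&` B]setCK setCI; apply/algebraC/algebraU; exact: algebraC.
Qed.

Section FinitelyAdditive.
Context {R : realType} (p : set S -> R).
Hypothesis hp : fa_prob Sig p.

Lemma fa_prob0 : p set0 = 0.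
Proof.
case: hp => _ [_ [_ hadd]].
by have := hadd _ _ algebra0 algebra0 (setI0 _); rewrite setU0; lra.
Qed.

Lemma fa_prob_ge0 A : 0 <= p A.
Proof. by case: hp => out0 [ge0 _]; case: (pselect (Sig A)) => [/ge0 // | /out0 ->]. Qed.

Lemma fa_probT : p setT = 1.
Proof. by case: hp => _ [_ []]. Qed.

Lemma fa_probU A B : Sig A -> Sig B -> A `&` B = set0 -> p (A `|` B) = p A + p B.
Proof. by case: hp => _ [_ [_]]; apply. Qed.

End FinitelyAdditive.

Lemma fa_prob_comb {R : realType} m (w : 'I_m -> R) (ps : 'I_m -> set S -> R) :
  (forall k, 0 <= w k) -> \sum_(k < m) w k = 1 -> (forall k, fa_prob Sig (ps k)) ->
  fa_prob Sig (fun A => \sum_(k < m) w k * ps k A).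
Proof.
move=> w_ge0 w_sum1 hps; split; [|split; [|split]].
- move=> A nSA; rewrite big1 // => k _.
  by case: (hps k) => out0 _; rewrite out0 ?mulr0.
- by move=> A _; apply: sumr_ge0 => k _; rewrite mulr_ge0 ?fa_prob_ge0.
- by rewrite -w_sum1; apply: eq_bigr => k _; rewrite fa_probT ?mulr1.
- move=> A B SA SB AB0; rewrite -big_split; apply: eq_bigr => k _.
  by rewrite fa_probU // mulrDr.
Qed.

Lemma co_fa_prob {R : realType} (P : set (set S -> R)) :
  P `<=` fa_prob Sig -> co P `<=` fa_prob Sig.
Proof.
by move=> PS _ [m [w [ps [w_ge0 [w_sum1 [Pps ->]]]]]]; apply: fa_prob_comb => // k; exact/PS.
Qed.

Lemma sub_co {R : realType} (P : set (set S -> R)) : P `<=` co P.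
Proof.
move=> p Pp; exists 1%N, (fun=> 1), (fun=> p); split=> //; split; first by rewrite big_ord1.
by split=> //; apply/funext => A; rewrite big_ord1 mul1r.
Qed.

Section Partition.
Variables (T : finType) (iota : S -> T).
Hypothesis iota_meas : forall t, Sig (iota @^-1` [set t]).

Let preimage_nil : iota @^-1` [set t | t \in [::]] = set0.
Proof. by apply/seteqP; split=> s. Qed.

Let preimage_cons t r : iota @^-1` [set t' | t' \in t :: r] =
  iota @^-1` [set t] `|` iota @^-1` [set t' | t' \in r].
Proof.
apply/seteqP; split=> s /=; rewrite in_cons; first by case/orP => [/eqP|]; [left|right].
by case=> [->|->]; rewrite ?eqxx ?orbT.
Qed.

Let preimage_enum (Q : set T) :
  iota @^-1` Q = iota @^-1` [set t | t \in [seq t <- index_enum T | `[< Q t >]]].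
Proof. by apply/seteqP; split=> s /=; rewrite mem_filter mem_index_enum andbT => /asboolP. Qed.

Lemma algebra_preimage (Q : set T) : Sig (iota @^-1` Q).
Proof.
rewrite preimage_enum; elim: [seq _ <- _ | _] => [|t r IH].
  by rewrite preimage_nil; exact: algebra0.
by rewrite preimage_cons; exact: algebraU.
Qed.

Lemma fa_prob_preimage {R : realType} (p : set S -> R) (Q : set T) : fa_prob Sig p ->
  p (iota @^-1` Q) = \sum_(t | `[< Q t >]) p (iota @^-1` [set t]).
Proof.
move=> hp; rewrite preimage_enum -big_filter.
elim: [seq _ <- _ | _] (filter_uniq (fun t => `[< Q t >]) (index_enum_uniq T)) => [|t r IH] /=.
  by rewrite preimage_nil big_nil fa_prob0.
case/andP => t_r /IH {}IH; rewrite preimage_cons big_cons fa_probU ?IH //;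
  try exact: algebra_preimage.
by apply/seteqP; split=> s //= [-> ts]; rewrite ts in t_r.
Qed.

Lemma fa_prob_fibers {R : realType} (p : set S -> R) : fa_prob Sig p ->
  \sum_t p (iota @^-1` [set t]) = 1.
Proof.
move=> hp; rewrite -(fa_probT hp) -(preimage_setT iota) fa_prob_preimage //.
by apply: eq_bigl => t; rewrite asboolT.
Qed.

Let sum_eq_uniq {R : realType} (W : eqType) (r : seq W) (a : W) (c : R) : uniq r ->
  \sum_(x <- r) (if a == x then c else 0) = if a \in r then c else 0.
Proof.
elim: r => [|x r IH]; rewrite ?big_nil // big_cons in_cons => /andP [x_r /IH ->].
by case: eqP => [->|_]; rewrite ?(negbTE x_r) ?addr0 ?add0r.
Qed.

Lemma expect_fiberwise {R : realType} {V : lmodType R} (u : V -> R) (y : T -> V)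
    (p : set S -> R) : fa_prob Sig p ->
  expect u (y \o iota) p = \sum_t u (y t) * p (iota @^-1` [set t]).
Proof.
move=> hp; have fin : finite_set (range (y \o iota)).
  apply: (sub_finite_set _ (finite_seq (map y (index_enum T)))).
  by move=> _ [s _ <-]; apply: map_f; exact: mem_index_enum.
rewrite /expect fsbig_finite //=; set r := finmap.enum_fset _.
transitivity (\sum_(x <- r) \sum_t (if y t == x then u (y t) * p (iota @^-1` [set t]) else 0)).
  apply: eq_bigr => x _; rewrite -[_ @^-1` _]/(iota @^-1` [set t | y t = x]).
  rewrite fa_prob_preimage // mulr_sumr big_mkcond; apply: eq_bigr => t _.
  by case: eqP => [<-|yx]; [rewrite asboolT | rewrite asboolF].
rewrite exchange_big; apply: eq_bigr => t _; rewrite sum_eq_uniq ?finmap.fset_uniq //.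
case: ifPn => // /negP yt_r; suff -> : iota @^-1` [set t] = set0 by rewrite fa_prob0 ?mulr0.
apply/seteqP; split=> s //= iota_s; apply: yt_r.
by rewrite in_fset_set // inE; exists s; rewrite //= iota_s.
Qed.

End Partition.
End Events.

(* [compact_cover] is only available for pointed spaces. *)
HB.instance Definition _ (I : Type) (K : I -> ptopologicalType) :=
  isPointed.Build (prod_topology K) (fun i => point).

Lemma continuous_fst (T U : topologicalType) : continuous (@fst T U).
Proof. by move=> [x y]; exact: cvg_fst. Qed.

Lemma continuous_snd (T U : topologicalType) : continuous (@snd T U).
Proof. by move=> [x y]; exact: cvg_snd. Qed.

Lemma continuous_sum {R : realType} (T : topologicalType) (I : Type) (r : seq I)
    (F : I -> T -> R) :
  (forall i, continuous (F i)) -> continuous (fun x => \sum_(i <- r) F i x).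
Proof. by move=> F_cont; apply: continuous_big => //; exact: add_continuous. Qed.

Lemma continuous_ptws {R : realType} (T : topologicalType) (I : Type)
    (g : T -> {ptws I -> R}) :
  (forall i, continuous (fun x => g x i)) -> continuous g.
Proof.
move=> g_cont x; apply/cvg_sup => i.
have evalT : range (fun h : I -> R => h i) = setT.
  by apply/seteqP; split=> // y _; exists (fun=> y).
apply/(cvg_image _ _ evalT) => A A_nbhs.
by exists ((fun h : I -> R => h i) @^-1` A); [exact: g_cont | exact: image_preimage].
Qed.

Lemma continuous_eval {R : realType} {S : Type} (A : set S) :
  continuous (fun p : {ptws set S -> R} => p A).
Proof. exact: (@proj_continuous _ (fun=> R) A). Qed.

Section Expectation.
Context {R : realType} {S : Type} {V : lmodType R} {Sig : set (set S)}.
Hypothesis hSig : is_algebra Sig.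
Context {u : V -> R}.

Lemma is_act_cst (X : set V) x : X x -> is_act Sig X (fun=> x).
Proof.
move=> Xx; split=> //; split=> [|y]; first exact: finite_image_cst.
by rewrite preimage_cst; case: ifPn => _; [exact: algebraT | exact: algebra0].
Qed.

Lemma expect_cst x (p : set S -> R) : fa_prob Sig p -> expect u (fun=> x) p = u x.
Proof.
move=> hp; have tt_meas (t : unit) : Sig ((fun _ : S => tt) @^-1` [set t]).
  by rewrite preimage_cst; case: ifPn => _; [exact: algebraT | exact: algebra0].
rewrite -[fun=> x]/((fun=> x) \o (fun _ : S => tt)) (expect_fiberwise hSig tt_meas) //.
rewrite (big_pred1 tt) ?preimage_cst ?mem_set ?(fa_probT hp) ?mulr1 //; by case.
Qed.

Lemma expect_comb (f : S -> V) m (w : 'I_m -> R) (ps : 'I_m -> set S -> R) :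
  finite_set (range f) ->
  expect u f (fun A => \sum_(k < m) w k * ps k A) = \sum_(k < m) w k * expect u f (ps k).
Proof.
move=> fin; rewrite /expect fsbig_finite //.
under [RHS]eq_bigr do rewrite fsbig_finite // mulr_sumr.
rewrite exchange_big; apply: eq_bigr => x _; rewrite mulr_sumr.
by apply: eq_bigr => k _; rewrite mulrCA.
Qed.

Lemma continuous_expect (f : S -> V) : finite_set (range f) ->
  continuous (fun p : {ptws set S -> R} => expect u f p).
Proof.
move=> fin; have -> : (fun p : {ptws set S -> R} => expect u f p) =
    (fun p => \sum_(x <- finmap.enum_fset (fset_set (range f))) u x * p (f @^-1` [set x])).
  by apply/funext => p; rewrite /expect fsbig_finite.
apply: continuous_sum => x p.
by apply: continuousM; [exact: cst_continuous | exact: continuous_eval].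
Qed.

Section Extrema.
Variables (C : set (set S -> R)) (f : S -> V).
Hypotheses (C_neq0 : C !=set0) (C_compact : wstar_compact C) (f_fin : finite_set (range f)).

Let expect_argmin : exists2 p, C p & forall q, C q -> expect u f p <= expect u f q.
Proof.
have [p /set_mem Cp p_min] := @compact_EVT_min {ptws set S -> R} R _ C C_neq0 C_compact
  (continuous_subspaceT (continuous_expect f_fin)).
by exists p => // q /mem_set /p_min.
Qed.

Let expect_argmax : exists2 p, C p & forall q, C q -> expect u f q <= expect u f p.
Proof.
have [p /set_mem Cp p_max] := @compact_EVT_max {ptws set S -> R} R _ C C_neq0 C_compact
  (continuous_subspaceT (continuous_expect f_fin)).
by exists p => // q /mem_set /p_max.
Qed.

Lemma minE_le q : C q -> minE u C f <= expect u f q.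
Proof.
have [p Cp p_min] := expect_argmin.
by move=> Cq; apply: ge_inf; [exists (expect u f p) => _ [r /p_min ? <-] | exists q].
Qed.

Lemma le_maxE q : C q -> expect u f q <= maxE u C f.
Proof.
have [p Cp p_max] := expect_argmax.
by move=> Cq; apply: ub_le_sup; [exists (expect u f p) => _ [r /p_max ? <-] | exists q].
Qed.

Lemma minE_attained : exists2 p, C p & minE u C f = expect u f p.
Proof.
have [p Cp p_min] := expect_argmin; exists p => //.
apply/le_anti; rewrite minE_le //=.
by apply: lb_le_inf; [exists (expect u f p); exists p | move=> _ [q /p_min ? <-]].
Qed.

Lemma maxE_attained : exists2 p, C p & maxE u C f = expect u f p.
Proof.
have [p Cp p_max] := expect_argmax; exists p => //.
apply/le_anti; rewrite le_maxE // andbT.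
by apply: ge_sup; [exists (expect u f p); exists p | move=> _ [q /p_max ? <-]].
Qed.

End Extrema.
End Expectation.

Definition bewley_or_hp_rep {R : realType} {S : Type} {V : lmodType R} (Sig : set (set S))
    (X : set V) (P : pref S V) (u : V -> R) (C : set (set S -> R)) : Prop :=
  hp_rep Sig X P u C C \/ bewley_rep Sig X P u C.

Section Representation.
Context {R : realType} {S : Type} {V : lmodType R} {Sig : set (set S)}.
Variables (X : set V) (u : V -> R) (P : pref S V) (C : set (set S -> R)).
Hypotheses (hSig : is_algebra Sig) (hP : bewley_or_hp_rep Sig X P u C).

Lemma rep_prior_set : prior_set Sig C /\ C !=set0.
Proof.
case: hP => [[_ [C_prior [_ [[p [Cp _]] _]]]] | [_ [C_prior [C_neq0 _]]]] //.
by split=> //; exists p.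
Qed.

Let C_fa : C `<=` fa_prob Sig. Proof. by case: rep_prior_set => -[]. Qed.
Let C_neq0 : C !=set0. Proof. by case: rep_prior_set. Qed.
Let C_compact : wstar_compact C. Proof. by case: rep_prior_set => -[_ []]. Qed.

Let cst_image x : [set expect u (fun=> x) p | p in C] = [set u x].
Proof.
have [p Cp] := C_neq0; apply/seteqP; split=> [_ [q Cq <-] | _ ->] /=.
  by rewrite (expect_cst hSig) //; exact: C_fa.
by exists p; rewrite ?(expect_cst hSig) //; exact: C_fa.
Qed.

Let minE_cst x : minE u C (fun=> x) = u x.
Proof. by rewrite /minE cst_image inf1. Qed.

Let maxE_cst x : maxE u C (fun=> x) = u x.
Proof. by rewrite /maxE cst_image sup1. Qed.

Lemma rep_cst_ltP f x : is_act Sig X f -> X x ->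
  P f (fun=> x) <-> forall p, C p -> u x < expect u f p.
Proof.
move=> f_act Xx; have f_fin := proj1 (proj2 f_act).
case: hP => [[_ [_ [_ [_ ->]]]] | [_ [_ [_ ->]]]] //; try exact: is_act_cst; last first.
  by split=> lt_E p Cp; have := lt_E p Cp; rewrite (expect_cst hSig) //; exact: C_fa.
rewrite minE_cst maxE_cst; split=> [[lt_min _] p Cp | lt_E].
  exact: lt_le_trans lt_min (minE_le C_neq0 C_compact f_fin Cp).
have [p Cp ->] := minE_attained (u := u) C_neq0 C_compact f_fin.
have [q Cq ->] := maxE_attained (u := u) C_neq0 C_compact f_fin.
by split; exact: lt_E.
Qed.

Lemma rep_lt_cstP f x : is_act Sig X f -> X x ->
  P (fun=> x) f <-> forall p, C p -> expect u f p < u x.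
Proof.
move=> f_act Xx; have f_fin := proj1 (proj2 f_act).
case: hP => [[_ [_ [_ [_ ->]]]] | [_ [_ [_ ->]]]] //; try exact: is_act_cst; last first.
  by split=> lt_E p Cp; have := lt_E p Cp; rewrite (expect_cst hSig) //; exact: C_fa.
rewrite minE_cst maxE_cst; split=> [[_ max_lt] p Cp | lt_E].
  exact: le_lt_trans (le_maxE C_neq0 C_compact f_fin Cp) max_lt.
have [p Cp ->] := minE_attained (u := u) C_neq0 C_compact f_fin.
have [q Cq ->] := maxE_attained (u := u) C_neq0 C_compact f_fin.
by split; exact: lt_E.
Qed.

Lemma rep_of_expect_lt f g : is_act Sig X f -> is_act Sig X g ->
  (forall p, C p -> expect u g p < expect u f p) -> P f g.
Proof.
move=> f_act g_act lt_E.
have f_fin := proj1 (proj2 f_act); have g_fin := proj1 (proj2 g_act).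
case: hP => [[_ [_ [_ [_ ->]]]] | [_ [_ [_ ->]]]] //; split.
- have [p Cp ->] := minE_attained (u := u) C_neq0 C_compact f_fin.
  exact: le_lt_trans (minE_le C_neq0 C_compact g_fin Cp) (lt_E p Cp).
- have [p Cp ->] := maxE_attained (u := u) C_neq0 C_compact g_fin.
  exact: lt_le_trans (lt_E p Cp) (le_maxE C_neq0 C_compact f_fin Cp).
Qed.
End Representation.

Lemma sum_sqr_variational {R : realType} k (c d : 'I_k -> R) :
  (forall t, 0 < t <= 1 -> \sum_j c j ^+ 2 <= \sum_j (c j + t * d j) ^+ 2) ->
  0 <= \sum_j c j * d j.
Proof.
move=> c_min; set s := \sum_j c j * d j; set D := \sum_j d j ^+ 2.
have D_ge0 : 0 <= D by apply: sumr_ge0 => j _; exact: sqr_ge0.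
have expand t : \sum_j (c j + t * d j) ^+ 2 = \sum_j c j ^+ 2 + t * (2 * s + t * D).
  rewrite /s /D mulrDr mulrA !mulr_sumr -!big_split /=.
  by apply: eq_bigr => j _; ring.
rewrite leNgt; apply/negP => s_lt0.
(* at this t, 2 * s + t * D = (1 + t) * s < 0 *)
pose t := - s / (D - s).
have Ds_gt0 : 0 < D - s by lra.
have tDs : t * (D - s) = - s by rewrite /t divfK // gt_eqF.
have t_gt0 : 0 < t by rewrite /t divr_gt0 // oppr_gt0.
have t_le1 : t <= 1 by rewrite /t ler_pdivrMr // mul1r; lra.
have := c_min t; rewrite t_gt0 t_le1 expand => /(_ isT).
rewrite lerDl pmulr_rge0 //; nra.
Qed.

Lemma finite_separating_events {R : realType} {S : Type} (Sig : set (set S))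
    (K : set (set S -> R)) q :
  wstar_compact K -> K `<=` fa_prob Sig -> fa_prob Sig q -> ~ K q ->
  exists k (B : 'I_k -> set S), (forall j, Sig (B j)) /\
    forall p, K p -> exists j, p (B j) <> q (B j).
Proof.
move=> K_compact K_fa q_fa nKq.
pose F A := [set p : {ptws set S -> R} | p A <> q A].
have F_open A : Sig A -> open (F A).
  move=> _; rewrite (_ : F A = (fun p : {ptws set S -> R} => p A) @^-1` ~` [set q A]) //.
  apply: open_comp => [p _|]; first exact: continuous_eval.
  by rewrite openC; exact: closed_eq.
have K_cover : K `<=` cover Sig F.
  move=> p Kp; have [A pqA] : exists A, p A <> q A.
    apply/existsNP => pq; apply: nKq; rewrite (_ : q = p) //.
    by apply/funext => A; exact/esym/pq.
  (* p and q both vanish off Sig *)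
  exists A => //; apply: contrapT => nSA; apply: pqA.
  by case: (K_fa _ Kp) q_fa => p0 _ [q0 _]; rewrite p0 ?q0.
move: K_compact; rewrite /wstar_compact compact_cover.
move=> /(_ _ _ _ F_open K_cover) [D D_Sig KD].
pose r := finmap.enum_fset D.
exists (size r), (fun j => nth set0 r j); split=> [j|p /KD [A DA pqA]].
  by apply/set_mem/D_Sig/mem_nth.
have A_r : (index A r < size r)%N by rewrite index_mem; exact: DA.
by exists (Ordinal A_r); rewrite /= nth_index.
Qed.

Lemma separating_functional {R : realType} {S : Type} (K : set (set S -> R)) q k
    (B : 'I_k -> set S) :
  wstar_compact K -> convex_meas K -> (forall p, K p -> exists j, p (B j) <> q (B j)) ->
  exists c : 'I_k -> R, forall p, K p -> \sum_j c j * q (B j) < \sum_j c j * p (B j).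
Proof.
move=> K_compact K_convex B_sep.
have [K_neq0|K0] := pselect (K !=set0); last first.
  by exists (fun=> 0) => p Kp; exfalso; apply: K0; exists p.
pose dist (p : {ptws set S -> R}) := \sum_j (p (B j) - q (B j)) ^+ 2.
have dist_cont : continuous dist.
  apply: continuous_sum => j p.
  have diff_cont : continuous (fun p : {ptws set S -> R} => p (B j) - q (B j)).
    by move=> p'; apply: continuousB; [exact: continuous_eval | exact: cst_continuous].
  exact: continuousM (diff_cont p) (diff_cont p).
have [ps /set_mem Kps ps_min] := @compact_EVT_min _ R dist K K_neq0 K_compact
  (continuous_subspaceT dist_cont).
pose c j := ps (B j) - q (B j).
have dist_gt0 : 0 < \sum_j c j ^+ 2.
  have [j pqj] := B_sep ps Kps.
  have cj_gt0 : 0 < c j ^+ 2 by rewrite exprn_even_gt0 //= subr_eq0; exact/eqP.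
  have : 0 <= \sum_(i | i != j) c i ^+ 2 by apply: sumr_ge0 => i _; exact: sqr_ge0.
  by move=> rest_ge0; rewrite (bigD1 j) // ltr_wpDr.
exists c => p Kp.
have c_min t : 0 < t <= 1 -> \sum_j c j ^+ 2 <= \sum_j (c j + t * (p (B j) - ps (B j))) ^+ 2.
  case/andP => t_gt0 t_le1.
  have Kpt : K (fun A => t * p A + (1 - t) * ps A).
    by apply: K_convex => //; rewrite (ltW t_gt0) t_le1.
  have -> : \sum_j (c j + t * (p (B j) - ps (B j))) ^+ 2 = dist (fun A => t * p A + (1 - t) * ps A).
    by apply: eq_bigr => j _; rewrite /c; congr (_ ^+ 2); ring.
  exact: ps_min (mem_set Kpt).
have decomp : \sum_j c j * p (B j) - \sum_j c j * q (B j) =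
    \sum_j c j * (p (B j) - ps (B j)) + \sum_j c j ^+ 2.
  by rewrite -sumrB -big_split; apply: eq_bigr => j _ /=; rewrite /c; ring.
by rewrite -subr_gt0 decomp ltr_wpDl // sum_sqr_variational.
Qed.

Section Atoms.
Context {S : Type} {Sig : set (set S)} (k : nat) (B : 'I_k -> set S).

Definition atom_of (s : S) : {ffun 'I_k -> bool} := [ffun j => `[< B j s >]].

Lemma algebra_atom_fiber : is_algebra Sig -> (forall j, Sig (B j)) ->
  forall t, Sig (atom_of @^-1` [set t]).
Proof.
move=> hSig B_meas t.
rewrite (_ : _ @^-1` _ = \bigcap_(j in [set` index_enum 'I_k]) (if t j then B j else ~` B j)).
  rewrite bigcap_seq; apply: (big_ind Sig); [exact: algebraT | exact: algebraI |].
  by move=> j _; case: (t j); [exact: B_meas | exact/algebraC/B_meas].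
apply/seteqP; split=> s /= => [<- j _ | s_in]; first by rewrite ffunE; case: asboolP.
apply/ffunP => j; rewrite ffunE.
by have := s_in j (mem_index_enum j); case: (t j) => /= ?; [exact: asboolT | exact: asboolF].
Qed.

Lemma event_atoms j : B j = atom_of @^-1` [set t : {ffun 'I_k -> bool} | t j].
Proof. by apply/seteqP; split=> s /=; rewrite ffunE => /asboolP. Qed.

Lemma sum_events_atoms {R : realType} (c : 'I_k -> R) (p : set S -> R) :
  is_algebra Sig -> (forall j, Sig (B j)) -> fa_prob Sig p ->
  \sum_j c j * p (B j) =
  \sum_(t : {ffun 'I_k -> bool}) (\sum_(j | t j) c j) * p (atom_of @^-1` [set t]).
Proof.
move=> hSig B_meas hp; have meas := algebra_atom_fiber hSig B_meas.
under eq_bigr do rewrite event_atoms (fa_prob_preimage hSig meas) // mulr_sumr big_mkcond /=.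
rewrite exchange_big /=; apply: eq_bigr => t _.
by rewrite mulr_suml [RHS]big_mkcond; apply: eq_bigr => j _; rewrite asboolb; case: (t j).
Qed.

End Atoms.

Section MixtureActs.
Context {R : realType} {S : Type} {V : lmodType R} {Sig : set (set S)}.
Variables (X : set V) (u : V -> R) (x1 x2 : V).
Hypotheses (hSig : is_algebra Sig) (X_convex : convex_X X) (u_affine : affine_on X u)
  (Xx1 : X x1) (Xx2 : X x2) (u_lt : u x1 < u x2).

Definition mix (t : R) : V := t *: x2 + (1 - t) *: x1.

Lemma mix_in t : 0 <= t <= 1 -> X (mix t).
Proof. exact: X_convex. Qed.

Lemma u_mix t : 0 <= t <= 1 -> u (mix t) = u x1 + (u x2 - u x1) * t.
Proof. by move=> t01; rewrite /mix u_affine //; ring. Qed.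

Lemma ltr_u_mix t t' : 0 <= t <= 1 -> 0 <= t' <= 1 -> t < t' -> u (mix t) < u (mix t').
Proof. by move=> t01 t'01 tt'; rewrite !u_mix // ltrD2l ltr_pM2l // subr_gt0. Qed.

Section FiberwiseMixture.
Variables (T : finType) (iota : S -> T) (tau : T -> R).
Hypotheses (iota_meas : forall t, Sig (iota @^-1` [set t]))
  (tau01 : forall t, 0 <= tau t <= 1).

Definition fiber_mean (p : set S -> R) := \sum_t tau t * p (iota @^-1` [set t]).

Lemma fiber_mean01 p : fa_prob Sig p -> 0 <= fiber_mean p <= 1.
Proof.
move=> hp; apply/andP; split.
  by apply: sumr_ge0 => t _; apply: mulr_ge0; [case/andP: (tau01 t) | exact: (fa_prob_ge0 hp)].
rewrite -(fa_prob_fibers hSig iota_meas hp); apply: ler_sum => t _.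
by apply: ler_piMl; [exact: (fa_prob_ge0 hp) | case/andP: (tau01 t)].
Qed.

Lemma is_act_mix : is_act Sig X (mix \o tau \o iota).
Proof.
split=> [s|]; first exact: mix_in.
split=> [|x]; last exact: (algebra_preimage hSig iota_meas [set t | mix (tau t) = x]).
apply: (sub_finite_set _ (finite_seq (map (mix \o tau) (index_enum T)))).
by move=> _ [s _ <-]; apply: map_f; exact: mem_index_enum.
Qed.

Lemma expect_mix p :
  fa_prob Sig p -> expect u (mix \o tau \o iota) p = u (mix (fiber_mean p)).
Proof.
move=> hp; rewrite (expect_fiberwise hSig iota_meas) // u_mix ?fiber_mean01 //.
transitivity (\sum_t (u x1 * p (iota @^-1` [set t]) +
                      (u x2 - u x1) * (tau t * p (iota @^-1` [set t])))).
  by apply: eq_bigr => t _; rewrite /= u_mix //; ring.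
by rewrite big_split -!mulr_sumr (fa_prob_fibers hSig iota_meas hp) mulr1.
Qed.

End FiberwiseMixture.

Lemma act_of_linear_functional k (B : 'I_k -> set S) (c : 'I_k -> R) :
  (forall j, Sig (B j)) ->
  exists h, [/\ is_act Sig X h,
    forall p, fa_prob Sig p -> exists2 x, X x & u x = expect u h p &
    forall p p', fa_prob Sig p -> fa_prob Sig p' ->
      \sum_j c j * p (B j) < \sum_j c j * p' (B j) -> expect u h p < expect u h p'].
Proof.
move=> B_meas; have atom_meas := algebra_atom_fiber hSig B_meas.
pose dd (t : {ffun 'I_k -> bool}) := \sum_(j | t j) c j.
pose M := \sum_j `|c j| + 1.
have M_gt0 : 0 < M by rewrite ltr_wpDl ?sumr_ge0.
have dd_bound t : - M <= dd t <= M.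
  rewrite -ler_norml; apply: le_trans (ler_norm_sum _ _ _) _.
  apply: (@le_trans _ _ (\sum_j `|c j|)); last by rewrite lerDl.
  by rewrite [leRHS](bigID (fun j => t j)) /= lerDl sumr_ge0.
pose tau t := (dd t + M) / (2 * M).
have tau01 t : 0 <= tau t <= 1.
  have /andP [lo hi] := dd_bound t.
  by rewrite divr_ge0 ?ler_pdivrMr ?mul1r ?mulr_gt0 /=; lra.
have mean_affine p : fa_prob Sig p ->
    fiber_mean (atom_of B) tau p = (\sum_j c j * p (B j) + M) / (2 * M).
  move=> hp; rewrite (sum_events_atoms c hSig B_meas hp).
  transitivity ((\sum_t (dd t * p (atom_of B @^-1` [set t]) + M * p (atom_of B @^-1` [set t])))
                / (2 * M)).
    by rewrite mulr_suml; apply: eq_bigr => t _; rewrite /tau; ring.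
  by rewrite big_split -mulr_sumr (fa_prob_fibers hSig atom_meas hp) mulr1.
exists (mix \o tau \o atom_of B); split.
- exact: is_act_mix.
- move=> p hp; exists (mix (fiber_mean (atom_of B) tau p)); last by rewrite expect_mix.
  exact/mix_in/fiber_mean01.
- move=> p p' hp hp' lt_L; rewrite !expect_mix //.
  apply: ltr_u_mix; rewrite ?fiber_mean01 // !mean_affine //.
  by rewrite ltr_pM2r ?invr_gt0 ?mulr_gt0 // ltrD2r.
Qed.

Lemma separation (K : set (set S -> R)) q :
  wstar_compact K -> convex_meas K -> K `<=` fa_prob Sig -> fa_prob Sig q -> ~ K q ->
  exists h, [/\ is_act Sig X h, forall p, K p -> expect u h q < expect u h p &
    forall p, fa_prob Sig p -> exists2 x, X x & u x = expect u h p].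
Proof.
move=> K_compact K_convex K_fa q_fa nKq.
have [k [B [B_meas B_sep]]] := finite_separating_events K_compact K_fa q_fa nKq.
have [c c_sep] := separating_functional K_compact K_convex B_sep.
have [h [h_act h_ce h_mono]] := act_of_linear_functional c B_meas.
by exists h; split=> // p Kp; apply: h_mono (K_fa _ Kp) (c_sep _ Kp).
Qed.

End MixtureActs.

Lemma convex_meas_pair {R : realType} {S : Type} (K : set (set S -> R)) p p' (a b : R) :
  convex_meas K -> K p -> K p' -> 0 <= a -> 0 <= b ->
  exists2 r, K r & (fun A => a * p A + b * p' A) = (fun A => (a + b) * r A).
Proof.
move=> K_convex Kp Kp' a_ge0 b_ge0.
have [ab0|ab_gt0] := eqVneq (a + b) 0.
  have -> : a = 0 by lra.
  have -> : b = 0 by lra.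
  by exists p => //; apply/funext => A; rewrite !(mul0r, addr0).
have ab_pos : 0 < a + b by rewrite lt_def ab_gt0 addr_ge0.
exists (fun A => a / (a + b) * p A + (1 - a / (a + b)) * p' A).
  apply: K_convex => //; apply/andP; split; first by rewrite divr_ge0 // ltW.
  by rewrite ler_pdivrMr // mul1r lerDl.
by apply/funext => A; field; rewrite gt_eqF.
Qed.

Section Mixtures.
Context {R : realType} {S : Type} (n : nat) (C : 'I_n -> set (set S -> R)).

Local Notation mixture_space :=
  (prod_topology (fun _ : 'I_n => (R * {ptws set S -> R})%type)).

Definition mixture_params : set mixture_space :=
  [set f | forall i, (`[0, 1] `*` C i) (f i)] `&` [set f | \sum_i (f i).1 = 1].

Definition mixture (f : mixture_space) : {ptws set S -> R} :=
  fun A => \sum_i (f i).1 * (f i).2 A.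

Definition mixtures : set (set S -> R) := mixture @` mixture_params.

Lemma continuous_weight i : continuous (fun f : mixture_space => (f i).1).
Proof.
move=> f; apply: (@continuous_comp _ _ _ (fun f : mixture_space => f i) fst).
  exact: (@proj_continuous _ (fun=> (R * {ptws set S -> R})%type) i).
exact: continuous_fst.
Qed.

Lemma continuous_component i A : continuous (fun f : mixture_space => (f i).2 A).
Proof.
move=> f; apply: (@continuous_comp _ _ _ (fun f : mixture_space => (f i).2) (fun p => p A)).
  apply: (@continuous_comp _ _ _ (fun f : mixture_space => f i) snd).
    exact: (@proj_continuous _ (fun=> (R * {ptws set S -> R})%type) i).
  exact: continuous_snd.
exact: continuous_eval.
Qed.

Lemma continuous_mixture : continuous mixture.
Proof.
apply: (@continuous_ptws R mixture_space (set S) mixture) => A; apply: continuous_sum => i f.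
exact: (@continuousM _ _ _ _ f (@continuous_weight i f) (@continuous_component i A f)).
Qed.

Lemma compact_mixtures : (forall i, wstar_compact (C i)) -> wstar_compact mixtures.
Proof.
move=> C_compact; apply: continuous_compact; first exact/continuous_subspaceT/continuous_mixture.
apply: compact_closedI.
  apply: (@tychonoff _ (fun=> (R * {ptws set S -> R})%type) (fun i => `[0, 1] `*` C i)) => i.
  by apply: compact_setX; [exact: segment_compact | exact: C_compact].
rewrite (_ : [set f | _] = (fun f : mixture_space => \sum_i (f i).1) @^-1` [set 1]) //.
apply: preimage_closed => [f _|]; last exact: closed_eq.
by apply: continuous_sum => i; exact: continuous_weight.
Qed.

Let mixture_paramsP f : mixture_params f ->
  [/\ forall i, 0 <= (f i).1 <= 1, forall i, C i (f i).2 & \sum_i (f i).1 = 1].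
Proof. by case=> f_in f_sum1; split=> // i; have [+ ?] := f_in i; rewrite /= in_itv. Qed.

Lemma mixtures_sub_co : mixtures `<=` co (\bigcup_(i in setT) C i).
Proof.
move=> _ [f /mixture_paramsP [f01 Cf f_sum1] <-].
exists n, (fun i => (f i).1), (fun i => (f i).2); split=> [i|].
  by case/andP: (f01 i).
by do 2!split=> //; move=> i; exists i.
Qed.

Lemma mixtures_fa_prob (Sig : set (set S)) :
  (forall i, C i `<=` fa_prob Sig) -> mixtures `<=` fa_prob Sig.
Proof. by move=> C_fa p /mixtures_sub_co; apply: co_fa_prob => q [i _ /C_fa]. Qed.

Lemma sub_mixtures i : (forall j, C j !=set0) -> C i `<=` mixtures.
Proof.
move=> C_neq0 p Cp; have [e Ce] := choice C_neq0.
exists (fun j => if j == i then (1, p : {ptws set S -> R}) else (0, e j)).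
  split=> [j|] /=; first by case: eqP => [->|_]; split; rewrite /= ?in_itv /= ?lexx ?ler01.
  by rewrite (bigD1 i) //= eqxx big1 ?addr0 // => j /negbTE ->.
apply/funext => A; rewrite /mixture (bigD1 i) //= eqxx mul1r big1 ?addr0 //.
by move=> j /negbTE -> /=; rewrite mul0r.
Qed.

Lemma convex_mixtures : (forall i, convex_meas (C i)) -> convex_meas mixtures.
Proof.
move=> C_convex p q a [f /mixture_paramsP [f01 Cf f_sum1] <-].
move=> [g /mixture_paramsP [g01 Cg g_sum1] <-] /andP [a_ge0 a_le1].
have a'_ge0 : 0 <= 1 - a by rewrite subr_ge0.
pose w i := a * (f i).1 + (1 - a) * (g i).1.
have /choice [r r_spec] : forall i, exists r, C i r /\
    (fun A => a * (f i).1 * (f i).2 A + (1 - a) * (g i).1 * (g i).2 A) = (fun A => w i * r A).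
  move=> i; have [/andP [fi_ge0 _] /andP [gi_ge0 _]] := (f01 i, g01 i).
  have [r Cr e] := convex_meas_pair (C_convex i) (Cf i) (Cg i)
    (mulr_ge0 a_ge0 fi_ge0) (mulr_ge0 a'_ge0 gi_ge0).
  by exists r.
exists (fun i => (w i, r i)).
  split=> [i|]; last by rewrite /= /w big_split /= -!mulr_sumr f_sum1 g_sum1; ring.
  split; last exact: (proj1 (r_spec i)).
  have [/andP [fi_ge0 fi_le1] /andP [gi_ge0 gi_le1]] := (f01 i, g01 i).
  by rewrite /= in_itv /= /w; apply/andP; split; nra.
apply/funext => A; rewrite /mixture !mulr_sumr -big_split; apply: eq_bigr => i _ /=.
by have := congr1 (fun h => h A) (proj2 (r_spec i)); rewrite /= !mulrA => <-.
Qed.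

End Mixtures.

Section Aggregation.
Context {R : realType} {S : Type} {V : lmodType R} {Sig : set (set S)}.
Variables (X : set V) (u : V -> R) (x1 x2 : V) (n : nat) (Pi : 'I_n -> pref S V)
  (C : 'I_n -> set (set S -> R)) (P0 : pref S V) (C0 : set (set S -> R)).
Hypotheses (hSig : is_algebra Sig) (X_convex : convex_X X) (u_affine : affine_on X u)
  (Xx1 : X x1) (Xx2 : X x2) (u_lt : u x1 < u x2)
  (Pi_rep : forall i, bewley_rep Sig X (Pi i) u (C i))
  (P0_rep : bewley_or_hp_rep Sig X P0 u C0).

Let Pi_rep' i : bewley_or_hp_rep Sig X (Pi i) u (C i). Proof. by right. Qed.
Let C_prior i : prior_set Sig (C i) /\ C i !=set0 := rep_prior_set (Pi_rep' i).
Let C0_prior : prior_set Sig C0 /\ C0 !=set0 := rep_prior_set P0_rep.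

Let C_fa i : C i `<=` fa_prob Sig. Proof. by case: (C_prior i) => -[]. Qed.
Let C_neq0 i : C i !=set0. Proof. by case: (C_prior i). Qed.
Let C_compact i : wstar_compact (C i). Proof. by case: (C_prior i) => -[_ []]. Qed.
Let C_convex i : convex_meas (C i). Proof. by case: (C_prior i) => -[_ []]. Qed.
Let C0_fa : C0 `<=` fa_prob Sig. Proof. by case: C0_prior => -[]. Qed.
Let C0_compact : wstar_compact C0. Proof. by case: C0_prior => -[_ []]. Qed.
Let C0_convex : convex_meas C0. Proof. by case: C0_prior => -[_ []]. Qed.

Let separation_from K q := separation hSig X_convex u_affine Xx1 Xx2 u_lt (K := K) (q := q).

Lemma pareto_of_sub_hull : C0 `<=` co (\bigcup_(i in setT) C i) ->
  forall f g, is_act Sig X f -> is_act Sig X g -> (forall i, Pi i f g) -> P0 f g.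
Proof.
move=> C0_sub f g f_act g_act fg.
apply: (rep_of_expect_lt P0_rep f_act g_act) => p /C0_sub.
move=> [m [w [ps [w_ge0 [w_sum1 [ps_in ->]]]]]].
rewrite !expect_comb; [|exact: (proj1 (proj2 f_act)) | exact: (proj1 (proj2 g_act))].
apply: convex_comb_lt => // k; have [i _ Ci_psk] := ps_in k.
have [_ [_ [_ Pi_iff]]] := Pi_rep i.
by move/(Pi_iff _ _ f_act g_act): (fg i); apply.
Qed.

Lemma sub_hull_of_pareto :
  (forall f g, is_act Sig X f -> is_act Sig X g -> (forall i, Pi i f g) -> P0 f g) ->
  C0 `<=` co (\bigcup_(i in setT) C i).
Proof.
move=> pareto q C0q; apply: contrapT => q_notin; have q_fa := C0_fa C0q.
have [h [h_act h_sep h_ce]] := separation_from (compact_mixtures C_compact)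
  (convex_mixtures C_convex) (mixtures_fa_prob C_fa) q_fa
  (fun Kq => q_notin (mixtures_sub_co Kq)).
have [x Xx hx] := h_ce q q_fa.
have : P0 h (fun=> x).
  apply: pareto (is_act_cst hSig Xx) _ => // i.
  apply/(rep_cst_ltP hSig (Pi_rep' i) h_act Xx) => p Cp; rewrite hx.
  exact/h_sep/(sub_mixtures C_neq0 Cp).
by move/(rep_cst_ltP hSig P0_rep h_act Xx)/(_ q C0q); rewrite hx ltxx.
Qed.

Lemma caution_of_hull_sub : co (\bigcup_(i in setT) C i) `<=` C0 ->
  forall f x, is_act Sig X f -> X x ->
    (exists i, incomparable (Pi i) f x) -> incomparable P0 f x.
Proof.
move=> hull_sub f x f_act Xx [i [not_gt not_lt]].
have Ci_C0 p : C i p -> C0 p by move=> Cp; apply/hull_sub/sub_co; exists i.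
split.
  move/(rep_cst_ltP hSig P0_rep f_act Xx) => lt_E; apply: not_gt.
  by apply/(rep_cst_ltP hSig (Pi_rep' i) f_act Xx) => p /Ci_C0 /lt_E.
move/(rep_lt_cstP hSig P0_rep f_act Xx) => lt_E; apply: not_lt.
by apply/(rep_lt_cstP hSig (Pi_rep' i) f_act Xx) => p /Ci_C0 /lt_E.
Qed.

Lemma hull_sub_of_caution :
  (forall f x, is_act Sig X f -> X x ->
     (exists i, incomparable (Pi i) f x) -> incomparable P0 f x) ->
  co (\bigcup_(i in setT) C i) `<=` C0.
Proof.
move=> caution q co_q; apply: contrapT => nC0q.
have q_fa : fa_prob Sig q by apply: co_fa_prob co_q => p [i _ /C_fa].
have [h [h_act h_sep h_ce]] := separation_from C0_compact C0_convex C0_fa q_fa nC0q.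
move: co_q => [m [w [ps [w_ge0 [w_sum1 [ps_in q_eq]]]]]].
have [k le_k] := exists_le_convex_comb (fun k => expect u h (ps k)) w_ge0 w_sum1.
have [i _ Ci_psk] := ps_in k; have [x Xx hx] := h_ce _ (C_fa Ci_psk).
have [not_gt _] : incomparable P0 h x.
  apply: (caution h x h_act Xx); exists i; split.
    by move/(rep_cst_ltP hSig (Pi_rep' i) h_act Xx)/(_ _ Ci_psk); rewrite hx ltxx.
  by move/(rep_lt_cstP hSig (Pi_rep' i) h_act Xx)/(_ _ Ci_psk); rewrite hx ltxx.
apply: not_gt; apply/(rep_cst_ltP hSig P0_rep h_act Xx) => p C0p; rewrite hx.
apply: le_lt_trans le_k _; rewrite -expect_comb -?q_eq; first exact: h_sep.
exact: (proj1 (proj2 h_act)).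
Qed.

End Aggregation.

Theorem proposition3 (R : realType) (S : Type) (V : lmodType R)
  (Sig : set (set S)) (X : set V) (n : nat) (u : V -> R)
  (Pi : 'I_n -> pref S V) (C : 'I_n -> set (set S -> R))
  (P0 : pref S V) (C0 : set (set S -> R)) :
  is_algebra Sig -> convex_X X -> non_singleton X ->
  affine_on X u -> nonconstant_on X u ->
  (forall i, unique_bewley Sig X (Pi i) u (C i)) ->
  (unique_hp Sig X P0 u C0 C0 \/ unique_bewley Sig X P0 u C0) ->
  let coU := co (\bigcup_(i in setT) C i) in
  let pareto := forall f g, is_act Sig X f -> is_act Sig X g ->
      (forall i, Pi i f g) -> P0 f g in
  let caution := forall f x, is_act Sig X f -> X x ->
      (exists i, incomparable (Pi i) f x) -> incomparable P0 f x in
  (pareto <-> C0 `<=` coU) /\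
  (caution <-> coU `<=` C0) /\
  (pareto -> caution -> C0 = coU).
Proof.
move=> hSig X_convex _ u_affine u_nonconst Pi_unique P0_unique coU pareto caution.
have [x1 [x2 [Xx1 Xx2 u_lt]]] : exists x1 x2, [/\ X x1, X x2 & u x1 < u x2].
  case: u_nonconst => x [y [Xx [Xy /eqP]]]; rewrite neq_lt => /orP [] ?.
    by exists x, y.
  by exists y, x.
have Pi_rep i := proj1 (Pi_unique i).
have P0_rep : bewley_or_hp_rep Sig X P0 u C0 by case: P0_unique => -[]; [left | right].
have pareto_iff : pareto <-> C0 `<=` coU.
  split; first exact: (sub_hull_of_pareto hSig X_convex u_affine Xx1 Xx2 u_lt Pi_rep P0_rep).
  exact: (pareto_of_sub_hull Pi_rep P0_rep).
have caution_iff : caution <-> coU `<=` C0.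
  split; first exact: (hull_sub_of_caution hSig X_convex u_affine Xx1 Xx2 u_lt Pi_rep P0_rep).
  exact: (caution_of_hull_sub hSig Pi_rep P0_rep).
by split=> //; split=> // /pareto_iff C0_sub /caution_iff sub_C0; apply/seteqP.
Qed.
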